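(* Let $d_\mu,d_\lambda\ge 2$ be integers with $d_\mu<d_\lambda$, and let $a\in(0,1)$. Let $|\mu\rangle,|\bar\mu\rangle\in\mathbb{C}^{d_\mu}\otimes\mathbb{C}^{d_\mu}$ and $|\lambda\rangle,|\bar\lambda\rangle\in\mathbb{C}^{d_\lambda}\otimes\mathbb{C}^{d_\lambda}$ be states whose squared Schmidt coefficients are the normalizations of the following tuples: $$\mu\propto(1,a^{d_\lambda},a^{2d_\lambda},\dots,a^{(d_\mu-1)d_\lambda}),\quad \lambda\propto(1,a,a^2,\dots,a^{d_\lambda-1}),$$ $$\bar\mu\propto(1,a,a^2,\dots,a^{d_\mu-1}),\quad \bar\lambda\propto(1,a^{d_\mu},a^{2d_\mu},\dots,a^{(d_\lambda-1)d_\mu}).$$ Then $|\mu\rangle\otimes|\lambda\rangle$ can be transformed into $|\bar\mu\rangle\otimes|\bar\lambda\rangle$ by a local unitary, and this transformation is non-trivial: $|\bar\mu\rangle$ is not equal to $|\mu\rangle$ up to local unitaries.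
   Context: The state $|\mu\rangle\otimes|\lambda\rangle$ is regarded as a bipartite state between two parties, each holding a $d_\mu$-dimensional and a $d_\lambda$-dimensional subsystem. A local unitary is $U_A\otimes U_B$ with $U_A,U_B\in\mathrm{U}(d_\mu d_\lambda)$. *)

From HB Require Import structures.
From mathcomp Require Import all_boot all_order all_algebra.
From mathcomp Require Import reals.
From mathcomp Require Import complex mxtens.
Set Implicit Arguments. Unset Strict Implicit. Unset Printing Implicit Defensive.
Import Order.TTheory GRing.Theory Num.Theory.
Local Open Scope ring_scope.

Definition adjmx (R : rcfType) m n (A : 'M[R[i]]_(m, n)) : 'M[R[i]]_(n, m) :=
  \matrix_(i, j) (A j i)^*.

Definition unitary (R : rcfType) n (A : 'M[R[i]]_n) : Prop :=
  A *m adjmx A = 1%:M /\ adjmx A *m A = 1%:M.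

(* Convention: a pure state |psi> = sum_{i,j} M i j |i>_A |j>_B of C^m (x) C^n
   is represented by its coefficient matrix M : 'M_(m, n). *)

(* Action of the local unitary UA (x) UB on a bipartite state with
   coefficient matrix M:  (UA (x) UB)|psi>  has coefficient matrix
   UA M UB^T. *)
Definition lu_apply (R : rcfType) m n (UA : 'M[R[i]]_m) (UB : 'M[R[i]]_n)
  (M : 'M[R[i]]_(m, n)) : 'M[R[i]]_(m, n) := UA *m M *m UB^T.

Definition lu_transformable (R : rcfType) m n (M N : 'M[R[i]]_(m, n)) : Prop :=
  exists (UA : 'M[R[i]]_m) (UB : 'M[R[i]]_n),
    unitary UA /\ unitary UB /\ lu_apply UA UB M = N.

(* The state of C^d (x) C^d with coefficient matrix M has a Schmidt
   decomposition |psi> = sum_k sqrt(p k) |u_k>|v_k> with orthonormal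
   bases (u_k) (columns of U) and (v_k) (columns of V); i.e. its squared
   Schmidt coefficients are (p k)_k. *)
Definition has_sq_schmidt (R : rcfType) d (M : 'M[R[i]]_d) (p : 'I_d -> R) : Prop :=
  exists (U V : 'M[R[i]]_d), unitary U /\ unitary V /\
    M = \sum_(k < d) (Num.sqrt (p k))%:C%C *: (col k U *m (col k V)^T).

Definition normalize (R : rcfType) d (w : 'I_d -> R) : 'I_d -> R :=
  fun k => w k / \sum_(j < d) w j.

Definition geom (R : rcfType) d (b : R) : 'I_d -> R := fun k => b ^+ k.

(* Kronecker product of coefficient matrices: the coefficient matrix of
   |psi> (x) |phi> regarded as a bipartite state between A = A1 A2 and
   B = B1 B2. *)
Notation "A *t B" := (tensmx A B) (at level 40, left associativity).
Arguments geom {R} d b.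

(** The squared Schmidt coefficients of [|mu>|lambda>] are the products of
    those of the factors.  With [S_n = 1 + a + ... + a^(n-1)], the weight of
    the index pair [(i, j)] is [a^(d_lambda i + j) / S_(d_mu d_lambda)] for
    [mu (x) lambda] and [a^(i + d_mu j) / S_(d_mu d_lambda)] for
    [mubar (x) lambdabar]; both run exactly once through the weights
    [a^k / S_(d_mu d_lambda)], [k < d_mu d_lambda], so the two states have
    the same Schmidt coefficients up to relabelling, which a local unitary
    realises.  Conversely, local unitaries conjugate [M M^dagger] by a unitary,
    so they preserve the multiset of squared Schmidt coefficients; the largest
    coefficient of [mu], namely [1 / (1 + a^d_lambda + ...)], exceeds every
    coefficient [a^i / (1 + a + ...)] of [mubar]. *)
From HB Require Import structures.
From mathcomp Require Import all_boot all_order all_algebra.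
From mathcomp Require Import reals.
From mathcomp Require Import fingroup perm complex mxtens.
Set Implicit Arguments. Unset Strict Implicit. Unset Printing Implicit Defensive.
Import Order.TTheory GRing.Theory Num.Theory.
Local Open Scope ring_scope.

Section Unitary.
Variable R : rcfType.
Local Notation C := R[i].

Lemma adjmx_mul m n p (A : 'M[C]_(m, n)) (B : 'M[C]_(n, p)) :
  adjmx (A *m B) = adjmx B *m adjmx A.
Proof.
apply/matrixP=> i j; rewrite !mxE rmorph_sum; apply: eq_bigr=> k _.
by rewrite !mxE rmorphM mulrC.
Qed.

Lemma adjmx_tr m n (A : 'M[C]_(m, n)) : adjmx A^T = (adjmx A)^T.
Proof. by apply/matrixP=> i j; rewrite !mxE. Qed.

Lemma adjmxK m n (A : 'M[C]_(m, n)) : adjmx (adjmx A) = A.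
Proof. by apply/matrixP=> i j; rewrite !mxE conjCK. Qed.

Lemma adjmx_tens m n p q (A : 'M[C]_(m, n)) (B : 'M[C]_(p, q)) :
  adjmx (A *t B) = adjmx A *t adjmx B.
Proof. by apply/matrixP=> i j; rewrite !mxE rmorphM. Qed.

Lemma tensmx1 m n : (1%:M : 'M[C]_m) *t (1%:M : 'M[C]_n) = 1%:M.
Proof.
apply/matrixP=> i j.
case: (mxtens_indexP i) => i1 i2; case: (mxtens_indexP j) => j1 j2.
rewrite tensmxE !mxE (inj_eq (can_inj (@mxtens_indexK m n))) xpair_eqE.
by rewrite -natrM mulnb.
Qed.

Lemma unitary_mul n (A B : 'M[C]_n) : unitary A -> unitary B -> unitary (A *m B).
Proof.
move=> [A1 A2] [B1 B2]; rewrite /unitary adjmx_mul; split.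
  by rewrite mulmxA -(mulmxA A) B1 mulmx1 A1.
by rewrite mulmxA -(mulmxA _ _ A) A2 mulmx1 B2.
Qed.

Lemma unitary_adj n (A : 'M[C]_n) : unitary A -> unitary (adjmx A).
Proof. by move=> [A1 A2]; rewrite /unitary adjmxK. Qed.

Lemma unitary_tens m n (A : 'M[C]_m) (B : 'M[C]_n) :
  unitary A -> unitary B -> unitary (A *t B).
Proof.
move=> [A1 A2] [B1 B2]; rewrite /unitary adjmx_tens !tensmx_mul.
by rewrite A1 A2 B1 B2 tensmx1.
Qed.

Lemma unitary_perm_mx n (s : 'S_n) : unitary (perm_mx s : 'M[C]_n).
Proof.
rewrite /unitary; have -> : adjmx (perm_mx s : 'M[C]_n) = (perm_mx s)^T.
  by apply/matrixP=> i j; rewrite !mxE rmorph_nat.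
by rewrite tr_perm_mx -!perm_mxM mulgV mulVg perm_mx1.
Qed.

Lemma unitary_trmx_mul_adj n (B : 'M[C]_n) : unitary B -> B^T *m (adjmx B)^T = 1%:M.
Proof. by move=> [_ B2]; rewrite -trmx_mul B2 trmx1. Qed.

Lemma gram_mx_unitaryr m n (A : 'M[C]_(m, n)) (D : 'M[C]_n) (V : 'M[C]_n) :
  unitary V -> (A *m D *m V^T) *m adjmx (A *m D *m V^T) = A *m (D *m adjmx D) *m adjmx A.
Proof.
move=> HV; rewrite !adjmx_mul adjmx_tr !mulmxA.
by rewrite -[A *m D *m V^T *m (adjmx V)^T]mulmxA unitary_trmx_mul_adj // mulmx1.
Qed.

Lemma unitary_intertwine_diag n (W : 'M[C]_n) (dp dq : 'rV[C]_n) :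
  unitary W -> diag_mx dq *m W = W *m diag_mx dp ->
  forall j, exists i, dq 0 i = dp 0 j.
Proof.
move=> [_ HW] E j.
have [i Wij] : exists i, W i j != 0.
  apply/existsP; apply: contraT; rewrite negb_exists => /forallP W0.
  have : (adjmx W *m W) j j = 1 by rewrite HW mxE eqxx.
  rewrite mxE big1 => [/eqP|k _]; first by rewrite eq_sym oner_eq0.
  by move/negPn/eqP: (W0 k) ->; rewrite mulr0.
exists i; apply: (mulIf Wij).
by move/matrixP/(_ i j): E; rewrite mul_diag_mx mul_mx_diag !mxE => ->; rewrite mulrC.
Qed.

End Unitary.

Section Schmidt.
Variable R : rcfType.
Local Notation C := R[i].

Definition sqrt_diag_mx d (p : 'I_d -> R) : 'M[C]_d :=
  diag_mx (\row_k (Num.sqrt (p k))%:C%C).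

Lemma schmidt_sumE d (p : 'I_d -> R) (U V : 'M[C]_d) :
  \sum_(k < d) (Num.sqrt (p k))%:C%C *: (col k U *m (col k V)^T)
  = U *m sqrt_diag_mx p *m V^T.
Proof.
apply/matrixP=> i j; rewrite mul_mx_diag summxE !mxE; apply: eq_bigr=> k _.
by rewrite !mxE big_ord1 !mxE mulrCA mulrA.
Qed.

Lemma has_sq_schmidtP d (M : 'M[C]_d) p :
  has_sq_schmidt M p <->
  exists U V : 'M[C]_d, [/\ unitary U, unitary V & M = U *m sqrt_diag_mx p *m V^T].
Proof.
split=> -[U [V]]; [case=> HU [HV ->] | case=> HU HV ->];
  by exists U, V; rewrite schmidt_sumE.
Qed.

Lemma eq_has_sq_schmidt d (M : 'M[C]_d) p q :
  p =1 q -> has_sq_schmidt M p -> has_sq_schmidt M q.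
Proof.
move=> epq [U [V [HU [HV ->]]]]; exists U, V; do 2 split=> //.
by apply: eq_bigr=> k _; rewrite epq.
Qed.

Lemma sqrt_diag_mx_tens m n (p : 'I_m -> R) (q : 'I_n -> R) :
  (forall k, 0 <= p k) ->
  sqrt_diag_mx p *t sqrt_diag_mx q
  = sqrt_diag_mx (fun x => p (mxtens_unindex x).1 * q (mxtens_unindex x).2).
Proof.
move=> p_ge0; apply/matrixP=> x y; rewrite !mxE.
rewrite -(inj_eq (can_inj (@mxtens_unindexK m n))).
case: (mxtens_unindex x) => x1 x2; case: (mxtens_unindex y) => y1 y2 /=.
rewrite xpair_eqE sqrtrM // rmorphM.
by case: eqP => _; case: eqP => _; rewrite ?mulr1n ?mulr0n ?mul1r ?mul0r ?mulr0.
Qed.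

Lemma sqrt_diag_mx_perm d (p : 'I_d -> R) (s : 'S_d) :
  sqrt_diag_mx (p \o s) = perm_mx s *m sqrt_diag_mx p *m (perm_mx s)^T.
Proof.
rewrite tr_perm_mx -col_permE -row_permE; apply/matrixP=> x y.
by rewrite !mxE (inj_eq perm_inj).
Qed.

Lemma sqrt_diag_mx_gram d (p : 'I_d -> R) : (forall k, 0 <= p k) ->
  sqrt_diag_mx p *m adjmx (sqrt_diag_mx p) = diag_mx (\row_k (p k)%:C%C).
Proof.
move=> p_ge0; rewrite mul_diag_mx; apply/matrixP=> i j; rewrite !mxE.
have [<-|_] := eqVneq i j; last by rewrite !mulr0n rmorph0 mulr0.
rewrite !mulr1n [X in _ * X](conjc_real (Num.sqrt (p i))).
by rewrite -rmorphM /= -expr2 sqr_sqrtr.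
Qed.

Lemma has_sq_schmidt_tens m n (M : 'M[C]_m) (N : 'M[C]_n) p q :
  (forall k, 0 <= p k) -> has_sq_schmidt M p -> has_sq_schmidt N q ->
  has_sq_schmidt (M *t N) (fun x => p (mxtens_unindex x).1 * q (mxtens_unindex x).2).
Proof.
move=> p_ge0 /has_sq_schmidtP[U1 [V1 [HU1 HV1 ->]]].
move=> /has_sq_schmidtP[U2 [V2 [HU2 HV2 ->]]].
apply/has_sq_schmidtP; exists (U1 *t U2), (V1 *t V2); split; try exact: unitary_tens.
by rewrite -(sqrt_diag_mx_tens q p_ge0) trmx_tens !tensmx_mul.
Qed.

Lemma has_sq_schmidt_perm d (M : 'M[C]_d) p (s : 'S_d) :
  has_sq_schmidt M (p \o s) -> has_sq_schmidt M p.
Proof.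
move=> /has_sq_schmidtP[U [V [HU HV ->]]]; apply/has_sq_schmidtP.
exists (U *m perm_mx s), (V *m perm_mx s).
split; [apply: unitary_mul => //; exact: unitary_perm_mx.. |].
by rewrite (sqrt_diag_mx_perm p s) trmx_mul !mulmxA.
Qed.

Lemma lu_transformable_sq_schmidt d (M N : 'M[C]_d) p :
  has_sq_schmidt M p -> has_sq_schmidt N p -> lu_transformable M N.
Proof.
move=> /has_sq_schmidtP[U [V [HU HV ->]]] /has_sq_schmidtP[U' [V' [HU' HV' ->]]].
exists (U' *m adjmx U), (V' *m adjmx V).
split; [|split]; try exact: unitary_mul (unitary_adj _).
rewrite /lu_apply !trmx_mul !mulmxA -[U' *m adjmx U *m U]mulmxA (proj2 HU) mulmx1.
by rewrite -[U' *m _ *m V^T *m _]mulmxA unitary_trmx_mul_adj // mulmx1.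
Qed.

Lemma has_sq_schmidt_gram d (M : 'M[C]_d) p : (forall k, 0 <= p k) ->
  has_sq_schmidt M p ->
  exists2 U, unitary U & M *m adjmx M = U *m diag_mx (\row_k (p k)%:C%C) *m adjmx U.
Proof.
move=> p_ge0 /has_sq_schmidtP[U [V [HU HV ->]]]; exists U => //.
by rewrite gram_mx_unitaryr // sqrt_diag_mx_gram.
Qed.

Lemma lu_transformable_sq_schmidt_mem d (M N : 'M[C]_d) p q :
  (forall k, 0 <= p k) -> (forall k, 0 <= q k) ->
  has_sq_schmidt M p -> has_sq_schmidt N q -> lu_transformable M N ->
  forall j, exists i, q i = p j.
Proof.
move=> p_ge0 q_ge0 SM SN [UA [UB [HA [HB EN]]]] j.
have [U HU GM] := has_sq_schmidt_gram p_ge0 SM.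
have [U' HU' GN] := has_sq_schmidt_gram q_ge0 SN.
set Dp := diag_mx _ in GM; set Dq := diag_mx _ in GN.
pose W := adjmx U' *m UA *m U.
have HW : unitary W by rewrite /W; do 2 apply: unitary_mul => //; exact: unitary_adj.
have DqE : Dq = W *m Dp *m adjmx W.
  have -> : Dq = adjmx U' *m (N *m adjmx N) *m U'.
    by rewrite GN !mulmxA (proj2 HU') mul1mx -mulmxA (proj2 HU') mulmx1.
  by rewrite -EN gram_mx_unitaryr // GM /W !adjmx_mul !adjmxK !mulmxA.
have DqW : Dq *m W = W *m Dp by rewrite DqE -mulmxA (proj2 HW) mulmx1.
have [i qpi] := unitary_intertwine_diag HW DqW j.
by exists i; apply: complexI; rewrite !mxE in qpi.
Qed.

End Schmidt.

Section GeometricWeights.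
Variable R : rcfType.

Lemma normalize_geom_ge0 d (b : R) k : 0 <= b -> 0 <= normalize (geom d b) k.
Proof.
move=> b_ge0; rewrite /normalize /geom divr_ge0 ?exprn_ge0 //.
by apply: sumr_ge0 => j _; rewrite exprn_ge0.
Qed.

Lemma sum_geom_mul m n (b : R) :
  (\sum_(i < m) (b ^+ n) ^+ i) * (\sum_(j < n) b ^+ j) = \sum_(k < m * n) b ^+ k.
Proof.
rewrite mulr_sum; apply: eq_bigr => k _.
have kE : ((mxtens_unindex k).1 * n + (mxtens_unindex k).2)%N = k :=
  congr1 val (mxtens_unindexK k).
by rewrite -exprM -exprD mulnC kE.
Qed.

Lemma normalize_geom_tens m n (b : R) (x : 'I_(m * n)) :
  normalize (geom m (b ^+ n)) (mxtens_unindex x).1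
  * normalize (geom n b) (mxtens_unindex x).2 = normalize (geom (m * n) b) x.
Proof.
rewrite /normalize /geom mulf_div sum_geom_mul -exprM -exprD mulnC.
by rewrite -[in X in b ^+ X](congr1 val (mxtens_unindexK x)).
Qed.

Lemma normalize_geom_cast d d' (e : d = d') (b : R) k :
  normalize (geom d' b) (cast_ord e k) = normalize (geom d b) k.
Proof. by case: d' / e; rewrite cast_ord_id. Qed.

Definition tens_swap m n : 'I_(m * n) -> 'I_(m * n) :=
  cast_ord (mulnC n m) \o @mxtens_index n m \o swap_pair \o @mxtens_unindex m n.

Lemma tens_swap_inj m n : injective (@tens_swap m n).
Proof.
rewrite /tens_swap; apply: inj_comp (can_inj (@mxtens_unindexK m n)).
apply: inj_comp (can_inj swap_pairK).
apply: inj_comp; [exact: cast_ord_inj | exact: can_inj (@mxtens_indexK n m)].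
Qed.

Definition tens_swap_perm m n : 'S_(m * n) := perm (@tens_swap_inj m n).

Lemma normalize_geom_tens_swap m n (b : R) (x : 'I_(m * n)) :
  normalize (geom m b) (mxtens_unindex x).1
  * normalize (geom n (b ^+ m)) (mxtens_unindex x).2
  = normalize (geom (m * n) b) (tens_swap_perm m n x).
Proof.
by rewrite permE normalize_geom_cast -normalize_geom_tens mxtens_indexK mulrC.
Qed.

Lemma normalize_geom_lt d (a b : R) (i j : 'I_d) :
  (1 < d)%N -> 0 <= b -> b < a -> a <= 1 -> val j = 0%N ->
  normalize (geom d a) i < normalize (geom d b) j.
Proof.
case: d i j => [|[|d]] // i j _ b_ge0 lt_ba a_le1 j0.
rewrite /normalize /geom j0 expr0.
have a_ge0 : 0 <= a by apply: le_trans (ltW lt_ba).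
have sum_gt0 (c : R) : 0 <= c -> 0 < \sum_(k < d.+2) c ^+ k.
  move=> c_ge0; rewrite big_ord_recl expr0 ltr_pwDl //.
  by apply: sumr_ge0 => k _; rewrite exprn_ge0.
have lt_sum : \sum_(k < d.+2) b ^+ k < \sum_(k < d.+2) a ^+ k.
  rewrite !big_ord_recl /= !expr0 !expr1 ltrD2l ltr_leD //.
  by apply: ler_sum => k _; apply: lerXn2r; rewrite ?nnegrE // ltW.
rewrite mul1r; apply: (@le_lt_trans _ _ (\sum_(k < d.+2) a ^+ k)^-1).
  by rewrite -[X in _ <= X]mul1r ler_wpM2r ?invr_ge0 ?exprn_ile1 // ltW ?sum_gt0.
by rewrite ltf_pV2 ?posrE ?sum_gt0.
Qed.

End GeometricWeights.

Theorem mainTheorem9 (R : realType) (dmu dlam : nat) (a : R)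
  (Mmu Mmubar : 'M[R[i]]_dmu) (Mlam Mlambar : 'M[R[i]]_dlam) :
  (2 <= dmu)%N -> (2 <= dlam)%N -> (dmu < dlam)%N ->
  0 < a -> a < 1 ->
  has_sq_schmidt Mmu (normalize (geom dmu (a ^+ dlam))) ->
  has_sq_schmidt Mlam (normalize (geom dlam a)) ->
  has_sq_schmidt Mmubar (normalize (geom dmu a)) ->
  has_sq_schmidt Mlambar (normalize (geom dlam (a ^+ dmu))) ->
  lu_transformable (Mmu *t Mlam) (Mmubar *t Mlambar) /\
  ~ lu_transformable Mmu Mmubar.
Proof.
move=> dmu_ge2 dlam_ge2 _ a_gt0 a_lt1 Smu Slam Smubar Slambar.
have a_ge0 : 0 <= a := ltW a_gt0.
have an_ge0 n k : 0 <= normalize (geom n a) k := normalize_geom_ge0 k a_ge0.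
have and_ge0 n d k : 0 <= normalize (geom n (a ^+ d)) k :=
  normalize_geom_ge0 k (exprn_ge0 d a_ge0).
split.
  apply: (lu_transformable_sq_schmidt (p := normalize (geom (dmu * dlam) a))).
    exact: eq_has_sq_schmidt (normalize_geom_tens a)
      (has_sq_schmidt_tens (and_ge0 _ _) Smu Slam).
  apply: (has_sq_schmidt_perm (s := tens_swap_perm dmu dlam)).
  exact: eq_has_sq_schmidt (normalize_geom_tens_swap a)
    (has_sq_schmidt_tens (an_ge0 _) Smubar Slambar).
have dmu_gt0 : (0 < dmu)%N by apply: leq_trans dmu_ge2.
move=> /(lu_transformable_sq_schmidt_mem (and_ge0 _ _) (an_ge0 _) Smu Smubar).
move=> /(_ (Ordinal dmu_gt0)) [k].
apply/eqP; rewrite lt_eqF // normalize_geom_lt ?exprn_ge0 ?ltW //.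
by rewrite ltr_iXnr ?a_gt0.
Qed.
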